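(* Let $f \in C((0,\infty);(0,\infty))$ be asymptotically increasing with $\lim_{x\to\infty} f(x)/x = \infty$, and define $\bar F(x) = \int_0^x f(s)\,ds$ for $x>0$. Then $\bar F$ preserves superexponential growth.
   Context: ''$f$ is asymptotically increasing'' means that there is a continuous increasing function $\phi:(0,\infty)\to(0,\infty)$ with $f(x)/\phi(x)\to 1$ as $x\to\infty$. A function $g \in C((0,\infty);(0,\infty))$ exhibits superexponential growth if $g(x)\to\infty$ as $x\to\infty$ and $\lim_{x\to\infty} g(x-\epsilon)/g(x) = 0$ for each $\epsilon>0$. A function $\phi \in C((0,\infty);(0,\infty))$ preserves superexponential growth if for every $g$ exhibiting superexponential growth and every $\epsilon>0$, $\lim_{x\to\infty}\phi(g(x-\epsilon))/\phi(g(x)) = 0$. *)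

From Stdlib Require Import Reals.
From Coquelicot Require Import Coquelicot.
Open Scope R_scope.

Definition pos_cont (f : R -> R) : Prop :=
  forall x, 0 < x -> continuous f x /\ 0 < f x.

Definition asymp_increasing (f : R -> R) : Prop :=
  exists phi : R -> R,
    pos_cont phi /\
    (forall x y, 0 < x -> x < y -> phi x < phi y) /\
    is_lim (fun x => f x / phi x) p_infty 1.

Definition superexp (g : R -> R) : Prop :=
  pos_cont g /\
  is_lim g p_infty p_infty /\
  forall eps, 0 < eps -> is_lim (fun x => g (x - eps) / g x) p_infty 0.

Definition preserves_superexp (phi : R -> R) : Prop :=
  pos_cont phi /\
  forall g, superexp g ->
    forall eps, 0 < eps ->
      is_lim (fun x => phi (g (x - eps)) / phi (g x)) p_infty 0.

(** Once [f] lies between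
    [phi/2] and [2 phi] beyond some [X0], monotonicity of [phi] gives, for
    [2 u <= v] and [v >= 2 X0], the two estimates
    [Fbar u <= Fbar X0 + 2 u phi(v/2)] and [Fbar v >= v phi(v/2) / 4]
    (integrate over [[v/2, v]]), hence
    [Fbar u / Fbar v <= K / v + 8 u / v] with [K = 4 Fbar X0 / phi X0].
    Along [u = g(x - eps)], [v = g x] both terms tend to [0] when [g] grows
    superexponentially. *)

From Stdlib Require Import Reals Lra.
From Coquelicot Require Import Coquelicot.
Open Scope R_scope.

Lemma locally_gt_half (x : R) : 0 < x -> locally x (fun y => x / 2 < y).
Proof.
  intros hx. exists (mkposreal (x / 2) ltac:(lra)). intros y Hy.
  change (Rabs (y - x) < x / 2) in Hy. destruct (Rabs_def2 _ _ Hy). lra.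
Qed.

Lemma ratio_lim1_bounds (f phi : R -> R) :
  (forall x, 0 < x -> 0 < phi x) ->
  is_lim (fun x => f x / phi x) p_infty 1 ->
  exists X0, 0 < X0 /\ forall t, X0 <= t -> phi t / 2 <= f t <= 2 * phi t.
Proof.
  intros Hphi Hlim. apply is_lim_spec in Hlim.
  destruct (Hlim (mkposreal (1 / 2) ltac:(lra))) as [M HM]. simpl in HM.
  exists (Rmax M 0 + 1). split.
  - pose proof (Rmax_r M 0). lra.
  - intros t Ht. pose proof (Rmax_l M 0). pose proof (Rmax_r M 0).
    assert (Hpt : 0 < phi t) by (apply Hphi; lra).
    specialize (HM t ltac:(lra)). apply Rabs_def2 in HM.
    replace (f t) with (f t / phi t * phi t) by (field; lra). nra.
Qed.

Lemma preserves_superexp_of_ratio_bound (F : R -> R) (K C V0 : R) :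
  pos_cont F ->
  (forall u v, 0 < u -> 2 * u <= v -> V0 <= v ->
     F u / F v <= K / v + C * (u / v)) ->
  preserves_superexp F.
Proof.
  intros HF Hbound. split; [exact HF |].
  intros g [Hg [Hg_inf Hg_ratio]] eps heps.
  specialize (Hg_ratio eps heps).
  apply is_lim_le_le_loc
    with (f := fun _ => 0) (g := fun x => K / g x + C * (g (x - eps) / g x)).
  - assert (Hpos : Rbar_locally' p_infty (fun x => eps < x)) by (exists eps; auto).
    assert (Hbig : Rbar_locally' p_infty (fun x => V0 <= g x)).
    { apply is_lim_spec in Hg_inf. destruct (Hg_inf V0) as [M HM].
      exists M. intros x Hx. left. now apply HM. }
    assert (Hhalf : Rbar_locally' p_infty (fun x => g (x - eps) / g x <= 1 / 2)).
    { apply is_lim_spec in Hg_ratio.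
      destruct (Hg_ratio (mkposreal (1 / 2) ltac:(lra))) as [M HM].
      exists M. intros x Hx. specialize (HM x Hx). simpl in HM.
      apply Rabs_def2 in HM. lra. }
    generalize (filter_and _ _ Hpos (filter_and _ _ Hbig Hhalf)).
    apply filter_imp. intros x (Hx & HV & Hr).
    assert (hu : 0 < g (x - eps)) by (apply Hg; lra).
    assert (hv : 0 < g x) by (apply Hg; lra).
    assert (HFu : 0 < F (g (x - eps))) by (apply HF; lra).
    assert (HFv : 0 < F (g x)) by (apply HF; lra).
    split.
    + left. now apply Rdiv_lt_0_compat.
    + apply Hbound; auto.
      replace (g (x - eps)) with (g (x - eps) / g x * g x) by (field; lra). nra.
  - apply is_lim_const.
  - assert (Hinv : is_lim (fun x => / g x) p_infty 0)
      by (apply (is_lim_inv _ _ p_infty); easy).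
    pose proof (is_lim_plus' _ _ _ _ _ (is_lim_scal_l _ K _ _ Hinv)
                  (is_lim_scal_l _ C _ _ Hg_ratio)) as H.
    rewrite !Rmult_0_r, Rplus_0_r in H. exact H.
Qed.

Lemma RInt_const_R (a b c : R) : RInt (fun _ => c) a b = (b - a) * c.
Proof. exact (RInt_const (V := R_CompleteNormedModule) a b c). Qed.

Section Antiderivative.

Variables f Fbar : R -> R.
Hypothesis Hf : pos_cont f.
Hypothesis HFbar : forall x, 0 < x -> is_RInt_gen f (at_right 0) (at_point x) (Fbar x).

Lemma ex_RInt_pos (a b : R) : 0 < a -> 0 < b -> ex_RInt f a b.
Proof.
  intros ha hb. apply (ex_RInt_continuous (V := R_CompleteNormedModule)).
  intros z Hz. apply Hf.
  assert (0 < Rmin a b) by (apply Rmin_glb_lt; lra). lra.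
Qed.

Lemma Fbar_Chasles (a b : R) : 0 < a -> 0 < b -> Fbar b = Fbar a + RInt f a b.
Proof.
  intros ha hb.
  assert (Hab : is_RInt_gen f (at_point a) (at_point b) (RInt f a b)).
  { apply is_RInt_gen_at_point, (RInt_correct (V := R_CompleteNormedModule)).
    now apply ex_RInt_pos. }
  pose proof (is_RInt_gen_Chasles (Fa := at_right 0) (Fc := at_point b)
                f a _ _ (HFbar a ha) Hab) as H.
  rewrite <- (is_RInt_gen_unique (V := R_CompleteNormedModule) _ _ (HFbar b hb)).
  now rewrite (is_RInt_gen_unique (V := R_CompleteNormedModule) _ _ H).
Qed.

Lemma Fbar_ge0 (a : R) : 0 < a -> 0 <= Fbar a.
Proof.
  intros ha.
  assert (Hnear : filter_prod (at_right 0) (at_point a)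
                    (fun ab : R * R => 0 < fst ab < a /\ snd ab = a)).
  { apply (Filter_prod _ _ _ (fun e => 0 < e < a) (fun y => y = a)).
    - exists (mkposreal a ha). intros y Hy Hy'.
      change (Rabs (y - 0) < a) in Hy. destruct (Rabs_def2 _ _ Hy). lra.
    - reflexivity.
    - simpl. auto. }
  (* [RInt_gen_norm] with [|f| = f] yields [|Fbar a| <= Fbar a]. *)
  assert (H : Rabs (Fbar a) <= Fbar a).
  { apply (RInt_gen_norm (V := R_CompleteNormedModule)
             (Fa := at_right 0) (Fb := at_point a) f f); auto.
    - revert Hnear. apply filter_imp. intros [e y] [He Hy]. simpl in *. lra.
    - revert Hnear. apply filter_imp. intros [e y] [He Hy] z Hz. simpl in *.
      assert (0 < f z) by (apply Hf; lra).
      unfold norm; simpl; unfold abs; simpl. rewrite Rabs_right; lra. }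
  pose proof (Rle_abs (- Fbar a)). rewrite Rabs_Ropp in *. lra.
Qed.

Lemma Fbar_gt0 (a : R) : 0 < a -> 0 < Fbar a.
Proof.
  intros ha. rewrite (Fbar_Chasles (a / 2) a) by lra.
  pose proof (Fbar_ge0 (a / 2) ltac:(lra)).
  assert (0 < RInt f (a / 2) a).
  { apply RInt_gt_0; [lra | |]; intros x Hx; apply Hf; lra. }
  lra.
Qed.

Lemma Fbar_le (a b : R) : 0 < a -> a <= b -> Fbar a <= Fbar b.
Proof.
  intros ha hab. rewrite (Fbar_Chasles a b) by lra.
  assert (0 <= RInt f a b).
  { apply RInt_ge_0; [lra | apply ex_RInt_pos; lra |].
    intros x Hx. left. apply Hf. lra. }
  lra.
Qed.

Lemma is_derive_Fbar (x : R) : 0 < x -> is_derive Fbar x (f x).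
Proof.
  intros hx.
  apply (is_derive_ext_loc (fun y => Fbar (x / 2) + RInt f (x / 2) y)).
  - generalize (locally_gt_half x hx). apply filter_imp. intros y Hy.
    symmetry. apply Fbar_Chasles; lra.
  - rewrite <- (Rplus_0_l (f x)).
    apply (is_derive_plus (K := R_AbsRing) (V := R_NormedModule)).
    + apply (is_derive_const (K := R_AbsRing) (V := R_NormedModule)).
    + apply (is_derive_RInt _ _ (x / 2)); [| apply Hf; lra].
      generalize (locally_gt_half x hx). apply filter_imp. intros y Hy.
      apply (RInt_correct (V := R_CompleteNormedModule)), ex_RInt_pos; lra.
Qed.

Lemma pos_cont_Fbar : pos_cont Fbar.
Proof.
  intros x hx. split.
  - apply (ex_derive_continuous (K := R_AbsRing) (V := R_NormedModule)).
    exists (f x). now apply is_derive_Fbar.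
  - now apply Fbar_gt0.
Qed.

Section Comparison.

Variables (phi : R -> R) (X0 : R).
Hypothesis Hphi_pos : forall x, 0 < x -> 0 < phi x.
Hypothesis Hphi_le : forall x y, 0 < x -> x <= y -> phi x <= phi y.
Hypothesis HX0 : 0 < X0.
Hypothesis Hf_phi : forall t, X0 <= t -> phi t / 2 <= f t <= 2 * phi t.

Lemma Fbar_upper_bound (u w : R) :
  0 < u -> u <= w -> X0 <= w -> Fbar u <= Fbar X0 + 2 * u * phi w.
Proof.
  intros hu huw hw.
  assert (Hw : 0 < phi w) by (apply Hphi_pos; lra).
  destruct (Rle_lt_dec u X0) as [Hle | Hlt].
  - pose proof (Fbar_le u X0 hu Hle). nra.
  - rewrite (Fbar_Chasles X0 u) by lra.
    assert (Hint : RInt f X0 u <= RInt (fun _ => 2 * phi w) X0 u).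
    { apply RInt_le; [lra | apply ex_RInt_pos; lra | apply ex_RInt_const |].
      intros t Ht. pose proof (Hphi_le t w ltac:(lra) ltac:(lra)).
      pose proof (Hf_phi t ltac:(lra)). lra. }
    rewrite RInt_const_R in Hint. nra.
Qed.

Lemma Fbar_lower_bound (v : R) : 2 * X0 <= v -> v * phi (v / 2) / 4 <= Fbar v.
Proof.
  intros hv. rewrite (Fbar_Chasles (v / 2) v) by lra.
  pose proof (Fbar_ge0 (v / 2) ltac:(lra)).
  assert (Hint : RInt (fun _ => phi (v / 2) / 2) (v / 2) v <= RInt f (v / 2) v).
  { apply RInt_le; [lra | apply ex_RInt_const | apply ex_RInt_pos; lra |].
    intros t Ht. pose proof (Hphi_le (v / 2) t ltac:(lra) ltac:(lra)).
    pose proof (Hf_phi t ltac:(lra)). lra. }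
  rewrite RInt_const_R in Hint. lra.
Qed.

Lemma Fbar_ratio_bound (u v : R) :
  0 < u -> 2 * u <= v -> 2 * X0 <= v ->
  Fbar u / Fbar v <= 4 * Fbar X0 / phi X0 / v + 8 * (u / v).
Proof.
  intros hu huv hv.
  set (P := phi (v / 2)).
  assert (HP0 : phi X0 <= P) by (apply Hphi_le; lra).
  assert (HX0pos : 0 < phi X0) by (apply Hphi_pos; lra).
  assert (HFX0 : 0 <= Fbar X0) by (now apply Fbar_ge0).
  assert (Hup : Fbar u <= Fbar X0 + 2 * u * P) by (apply Fbar_upper_bound; lra).
  assert (Hlow : v * P / 4 <= Fbar v) by (now apply Fbar_lower_bound).
  assert (HP : 0 < P) by (apply Hphi_pos; lra).
  assert (HFv : 0 < v * P / 4) by (apply Rdiv_lt_0_compat; [nra | lra]).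
  apply Rle_trans with ((Fbar X0 + 2 * u * P) / (v * P / 4)).
  - apply Rmult_le_compat; [now apply Fbar_ge0 | | exact Hup |].
    + apply Rlt_le, Rinv_0_lt_compat; lra.
    + apply Rinv_le_contravar; lra.
  - assert (Fbar X0 * phi X0 <= Fbar X0 * P) by nra.
    apply (Rmult_le_reg_r (v * P * phi X0)); [nra |].
    replace ((Fbar X0 + 2 * u * P) / (v * P / 4) * (v * P * phi X0))
      with (4 * (Fbar X0 + 2 * u * P) * phi X0) by (field; lra).
    replace ((4 * Fbar X0 / phi X0 / v + 8 * (u / v)) * (v * P * phi X0))
      with (4 * Fbar X0 * P + 8 * u * P * phi X0) by (field; lra).
    nra.
Qed.

End Comparison.

End Antiderivative.

Theorem corollary1 (f Fbar : R -> R) :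
  pos_cont f ->
  asymp_increasing f ->
  is_lim (fun x => f x / x) p_infty p_infty ->
  (forall x, 0 < x -> is_RInt_gen f (at_right 0) (at_point x) (Fbar x)) ->
  preserves_superexp Fbar.
Proof.
  intros Hf [phi [Hphi [Hphi_lt Hlim]]] _ HFbar.
  assert (Hphi_pos : forall x, 0 < x -> 0 < phi x) by (intros x hx; now apply Hphi).
  assert (Hphi_le : forall x y, 0 < x -> x <= y -> phi x <= phi y).
  { intros x y hx [Hxy | ->]; [left; now apply Hphi_lt | lra]. }
  destruct (ratio_lim1_bounds f phi Hphi_pos Hlim) as [X0 [HX0 Hf_phi]].
  apply (preserves_superexp_of_ratio_bound Fbar (4 * Fbar X0 / phi X0) 8 (2 * X0)).
  - exact (pos_cont_Fbar f Fbar Hf HFbar).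
  - intros u v hu huv hv.
    exact (Fbar_ratio_bound f Fbar Hf HFbar phi X0 Hphi_pos Hphi_le HX0 Hf_phi
             u v hu huv hv).
Qed.
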